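(* Let $P$ be a finite nonempty set of nonempty linear strings over an ordered finite alphabet $\Sigma$. Let $c$ be any circular superstring of $P\cup\overline P$. Then $g(c)$ is a linear superstring of $P$, and $|g(c)|\le |c|/2$.
   Context: Let $\overline\Sigma=\{\overline a: a\in\Sigma\}$ be a disjoint copy of $\Sigma$. The alphabet $\Sigma\cup\overline\Sigma$ is totally ordered so that $a<\overline b$ for all $a\in\Sigma$ and $\overline b\in\overline\Sigma$. For $w=a_1\dots a_k$ over $\Sigma$, set $\overline w=\overline{a_1}\dots\overline{a_k}$, and let $\overline P=\{\overline w: w\in P\}$. A circular string $\langle a_1\dots a_n\rangle$ has length $n$, and its substrings are the finite substrings of $(a_1\dots a_n)^\infty$. A (circular or linear) superstring of a set of strings contains each of them as a substring. For a circular superstring $c$ of $P\cup\overline P$ of length $k$, let $l(c)$ be the lexicographically smallest linear string among the circular shifts of $c$ whose first letter is in $\Sigma$ and whose $k$-th (last) letter is in $\overline\Sigma$. For a linear string $w$ and a sub-alphabet $\Sigma''$, $w|_{\Sigma''}$ denotes the subsequence of $w$ formed by its letters in $\Sigma''$. Let $g'(c)$ be whichever of $l(c)|_{\Sigma}$ and $l(c)|_{\overline\Sigma}$ has minimal length. Then set $g(c)=a_1\dots a_k$ if either $g'(c)=a_1\dots a_k\in\Sigma^*$ or $g'(c)=\overline{a_1}\dots\overline{a_k}\in\overline\Sigma^*$. *)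

From HB Require Import structures.
From mathcomp Require Import all_boot all_order.
Set Implicit Arguments. Unset Strict Implicit. Unset Printing Implicit Defensive.
Import Order.TTheory.

(* Letters of Sigma ∪ Sigma-bar are encoded as [Sigma + Sigma]:
   [inl a] is the letter a, [inr a] is the letter \overline a. *)
Section Strings.
Context {d : Order.disp_t} {Sigma : finOrderType d}.

Local Notation letter := (Sigma + Sigma)%type.

Definition letter_lt (x y : letter) : bool :=
  match x, y with
  | inl a, inl b => (a < b)%O
  | inl _, inr _ => true
  | inr _, inl _ => false
  | inr a, inr b => (a < b)%O
  end.

Fixpoint lex_le (s t : seq letter) : bool :=
  match s, t with
  | [::], _ => true
  | _ :: _, [::] => false
  | x :: s', y :: t' => letter_lt x y || ((x == y) && lex_le s' t')
  end.

Definition lex_min (ss : seq (seq letter)) : seq letter :=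
  match ss with
  | [::] => [::]
  | s :: ss' => foldl (fun m t => if lex_le t m then t else m) s ss'
  end.

Definition bar (w : seq Sigma) : seq letter := map inr w.
Definition unbar (w : seq Sigma) : seq letter := map inl w.

(* A circular string <w> (represented by a linear representative w) contains s
   iff s is a substring of w^infinity, i.e. of some finite power of w. *)
Definition circ_substring (s w : seq letter) : Prop :=
  exists n, infix s (flatten (nseq n w)).

Definition circ_superstring (Q : seq (seq letter)) (w : seq letter) : Prop :=
  forall s, s \in Q -> circ_substring s w.

Definition is_plain (x : letter) : bool := if x is inl _ then true else false.
Definition is_barred (x : letter) : bool := if x is inr _ then true else false.

Definition good_lin (s : seq letter) : bool :=
  (if s is x :: _ then is_plain x else false) &&
  (if rev s is y :: _ then is_barred y else false).

Definition good_shifts (w : seq letter) : seq (seq letter) :=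
  [seq s <- [seq rot i w | i <- iota 0 (size w)] | good_lin s].

Definition lc (w : seq letter) : seq letter := lex_min (good_shifts w).

Definition getl (x : letter) : option Sigma := if x is inl a then Some a else None.
Definition getr (x : letter) : option Sigma := if x is inr a then Some a else None.
Definition restr_plain (s : seq letter) : seq Sigma := pmap getl s.
Definition restr_barred (s : seq letter) : seq Sigma := pmap getr s.

Definition gc (w : seq letter) : seq Sigma :=
  let l := lc w in
  if size (restr_plain l) <= size (restr_barred l) then restr_plain l
  else restr_barred l.

End Strings.

From mathcomp Require Import all_boot all_order.
From mathcomp Require Import zify.
Set Implicit Arguments. Unset Strict Implicit.

(* Since P is nonempty and its words are nonempty, c contains both a plain and
   a barred letter, so some shift of c starts with a plain letter and ends with
   a barred one; let l = l(c). In the infinite word l l l ... every junction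
   between two copies of l reads "barred letter, plain letter". An all-plain
   word (such as a word of P) therefore cannot cross the barred letter that
   ends each copy of l, and an all-barred word (such as a word of bar P) cannot
   cross the plain letter that starts each copy. So every such substring of c
   already occurs in the linear word l. Hence both l|_Sigma and l|_{Sigma-bar}
   contain every word of P. The two restrictions have total length |c|, so
   the shorter one has length at most |c|/2. *)

Section Infix.
Variable T : eqType.
Implicit Types (x : T) (s u v w : seq T).

Lemma prefix_cat_notin x s u v :
  x \notin s -> prefix s (u ++ x :: v) -> prefix s u.
Proof.
elim: u s => [|y u IH] [|z s] //=.
  by rewrite inE negb_or eq_sym => /andP[/negPf ->].
by rewrite inE negb_or => /andP[_ /IH xs] /andP[-> /xs].
Qed.

Lemma infix_cat_notin x s u v :
  x \notin s -> infix s (u ++ x :: v) -> infix s u || infix s v.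
Proof.
move=> xs; elim: u => [|y u IH].
  rewrite cat0s infix_consl => /orP[sx|->]; last by rewrite orbT.
  by rewrite (prefixW (prefix_cat_notin (u := [::]) xs sx)).
rewrite cat_cons !infix_consl => /orP[sx|/IH/orP[->|->]]; rewrite ?orbT //.
by rewrite (prefix_cat_notin (u := y :: u) xs sx).
Qed.

Lemma flatten_nseqSr (n : nat) w :
  flatten (nseq n.+1 w) = flatten (nseq n w) ++ w.
Proof. by rewrite -addn1 nseqD flatten_cat /= cats0. Qed.

Lemma infix_flatten_nseq_cons x s w n :
  x \notin s -> infix s (flatten (nseq n (x :: w))) -> infix s (x :: w).
Proof.
move=> xs; elim: n => [|n IH]; first by rewrite infixs0 => /eqP ->; apply: infix0s.
rewrite flatten_nseqSr => /(infix_cat_notin xs)/orP[/IH //|sw].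
exact: infix_trans sw (infix_cons w x).
Qed.

Lemma infix_flatten_nseq_rcons x s w n :
  x \notin s -> infix s (flatten (nseq n (rcons w x))) -> infix s (rcons w x).
Proof.
move=> xs; elim: n => [|n IH]; first by rewrite infixs0 => /eqP ->; apply: infix0s.
rewrite /= cat_rcons => /(infix_cat_notin xs)/orP[sw|/IH //].
exact: infix_trans sw (infix_rcons w x).
Qed.

Lemma flatten_nseq_rot (n i : nat) w :
  flatten (nseq n.+1 (rot i w)) = drop i w ++ flatten (nseq n w) ++ take i w.
Proof.
elim: n => [|n IH]; first by rewrite /= !cats0.
rewrite flatten_nseqSr IH flatten_nseqSr /rot -!catA.
by rewrite [take i w ++ (drop i w ++ _)]catA cat_take_drop.
Qed.

Lemma infix_flatten_nseq_rot s w i n :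
  infix s (flatten (nseq n w)) -> infix s (flatten (nseq n.+1 (rot i w))).
Proof. by rewrite flatten_nseq_rot => /infix_trans; apply; apply: infix_infix. Qed.

Lemma mem_flatten_nseq x w n : x \in flatten (nseq n w) -> x \in w.
Proof. by case/flattenP=> s /nseqP[-> _]. Qed.

Lemma rot_find_head_last (q : pred T) u y : has q u -> ~~ q (last y u) ->
  q (head y (rot (find q u) u)) && ~~ q (last y (rot (find q u) u)).
Proof.
move=> qu qlast; have klt : find q u < size u by rewrite -has_find.
have qk := nth_find y qu.
case Ek: (find q u) klt qk => [|k] klt qk; first by rewrite rot0 -nth0 qk.
rewrite /rot (take_nth y) 1?ltnW // last_cat last_rcons (drop_nth y klt) /= qk.
by rewrite before_find ?Ek.
Qed.

Lemma mem_rotations w n :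
  w != [::] -> rot n w \in [seq rot i w | i <- iota 0 (size w)].
Proof.
move=> w0; have [nw|/rot_oversize ->] := ltnP n (size w).
  by apply: map_f; rewrite mem_iota.
by apply/mapP; exists 0; rewrite ?rot0 // mem_iota lt0n size_eq0.
Qed.

Lemma infix_pmap (U : eqType) (f : T -> option U) s t :
  infix s t -> infix (pmap f s) (pmap f t).
Proof. by case/infixP=> a [b ->]; rewrite !pmap_cat infix_infix. Qed.

End Infix.

Section Strings.
Context {d : Order.disp_t} {Sigma : finOrderType d}.
Local Notation letter := (Sigma + Sigma)%type.
Implicit Types (x y : letter) (s w l : seq letter) (p : seq Sigma).

Lemma is_barredE x : is_barred x = ~~ is_plain x.
Proof. by case: x. Qed.

Lemma good_lin_head_last s y : s != [::] ->
  good_lin s = is_plain (head y s) && is_barred (last y s).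
Proof. by case/lastP: s => [|[|x s] z] //; rewrite /good_lin rev_rcons last_rcons. Qed.

Lemma exists_good_rot w : has is_plain w -> has is_barred w ->
  exists k, good_lin (rot k w).
Proof.
move=> /hasP[x xw px] /hasP[y yw by_].
have [i u Eu] := rot_to yw.
have plain_u : has is_plain (rcons u y).
  by rewrite -rot1_cons -Eu !has_rot; apply/hasP; exists x.
have := rot_find_head_last (y := y) plain_u.
rewrite last_rcons -is_barredE => /(_ by_).
rewrite -is_barredE -good_lin_head_last; last first.
  by rewrite -size_eq0 size_rot size_rcons.
by rewrite -rot1_cons -Eu !rot_rot_add => good; eexists; exact: good.
Qed.

Lemma lex_min_mem (ss : seq (seq letter)) : ss != [::] -> lex_min ss \in ss.
Proof.
case: ss => [|s ss] // _ /=; elim: ss s => [|t ss IH] s /=; first exact: mem_head.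
case: ifP => _; first by rewrite in_cons IH orbT.
by move: (IH s); rewrite !in_cons => /orP[->|->]; rewrite ?orbT.
Qed.

Lemma lc_in_good_shifts w : has is_plain w -> has is_barred w ->
  lc w \in good_shifts w.
Proof.
move=> plain_w barred_w; apply: lex_min_mem.
have [k gk] := exists_good_rot plain_w barred_w.
have w0 : w != [::] by case: (w) plain_w.
have : rot k w \in good_shifts w by rewrite mem_filter gk mem_rotations.
by apply: contraTneq => ->.
Qed.

Lemma circ_substring_mem s w : circ_substring s w -> {subset s <= w}.
Proof. by case=> n /mem_infix sub x /sub/mem_flatten_nseq. Qed.

Lemma circ_substring_rot s w i : circ_substring s w -> circ_substring s (rot i w).
Proof. by case=> n /(infix_flatten_nseq_rot i); exists n.+1. Qed.

Lemma good_lin_infix_unbar l p : good_lin l ->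
  circ_substring (unbar p) l -> infix (unbar p) l.
Proof.
case/lastP: l => [|l y] //; rewrite /good_lin rev_rcons => /andP[_ barred_y] [n].
by apply: infix_flatten_nseq_rcons; apply/mapP => -[a _ ya]; rewrite ya in barred_y.
Qed.

Lemma good_lin_infix_bar l p : good_lin l ->
  circ_substring (bar p) l -> infix (bar p) l.
Proof.
case: l => [|x l] //= /andP[plain_x _] [n].
by apply: infix_flatten_nseq_cons; apply/mapP => -[a _ xa]; rewrite xa in plain_x.
Qed.

Lemma restr_plain_unbar p : restr_plain (unbar p) = p.
Proof. exact: map_pK. Qed.

Lemma restr_barred_bar p : restr_barred (bar p) = p.
Proof. exact: map_pK. Qed.

Lemma size_restr l : size (restr_plain l) + size (restr_barred l) = size l.
Proof.
rewrite !size_pmap -(count_predC [eta getl]); congr (_ + _).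
by apply: eq_count; case.
Qed.

Lemma double_size_gc w : 2 * size (gc w) <= size (lc w).
Proof. by rewrite /gc -size_restr; case: ifP; lia. Qed.

End Strings.

Theorem lemma4 (d : Order.disp_t) (Sigma : finOrderType d)
  (P : seq (seq Sigma)) (w : seq (Sigma + Sigma)) :
  P != [::] ->
  (forall p, p \in P -> p != [::]) ->
  circ_superstring (map unbar P ++ map bar P) w ->
  (forall p, p \in P -> infix p (gc w)) /\ (2 * size (gc w) <= size w)%N.
Proof.
move=> P0 Pne Pw.
have unbarP p : p \in P -> circ_substring (unbar p) w.
  by move=> pP; apply: Pw; rewrite mem_cat map_f.
have barP p : p \in P -> circ_substring (bar p) w.
  by move=> pP; apply: Pw; rewrite mem_cat map_f ?orbT.
have [p0 p0P] : exists p0, p0 \in P.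
  by case: (P) P0 => // p0 P' _; exists p0; exact: mem_head.
have [a ap0] : exists a, a \in p0.
  by case: (p0) (Pne _ p0P) => // a p0' _; exists a; exact: mem_head.
have plain_w : has is_plain w.
  apply/hasP; exists (inl a) => //.
  exact: circ_substring_mem (unbarP _ p0P) _ (map_f _ ap0).
have barred_w : has is_barred w.
  apply/hasP; exists (inr a) => //.
  exact: circ_substring_mem (barP _ p0P) _ (map_f _ ap0).
move: (lc_in_good_shifts plain_w barred_w).
rewrite mem_filter => /andP[gl /mapP[i _ El]].
split; last by rewrite -(size_rot i w) -El double_size_gc.
move=> p pP; rewrite /gc; case: ifP => _.
  rewrite -[p]restr_plain_unbar; apply/infix_pmap/good_lin_infix_unbar => //.
  by rewrite El; apply/circ_substring_rot/unbarP.
rewrite -[p]restr_barred_bar; apply/infix_pmap/good_lin_infix_bar => //.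
by rewrite El; apply/circ_substring_rot/barP.
Qed.
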